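(* Let $X$ be a nonempty set, $\eta\in[0,1)$, $G\subseteq X\times X$ reflexive, symmetric and idempotent ($G\circ G=G$), $\mu$ a finitely additive measure on $\mathcal P(X)$, and $\mu^{\otimes2}$ a finitely additive set function on the product algebra $\mathcal P(X)\otimes\mathcal P(X)$ with $\mu^{\otimes2}(A\times B)=\mu(A)\mu(B)$. Suppose $G$ has finitely many equivalence classes $C_1,\dots,C_m$, that $\mu(C_j)>0$ for all $j$, and that the coupling law $\mu^{\otimes2}((B\times X)\cap G)=\mu(B)+\eta\,\mu^{\otimes2}((B\times X)\cap G)$ holds for all $B\subseteq X$. Then \[\mu(X)=\frac{m}{1-\eta},\qquad \mu^{\otimes2}(G)=\sum_{j=1}^m\mu(C_j)^2=\frac{m}{(1-\eta)^2},\] and $\mu^{\otimes2}((B\times X)\cap G)=\frac{\mu(B)}{1-\eta}$ for every $B\subseteq X$.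
   Context: For relations, $H\circ K=\{(x,z):\exists y\,(x,y)\in H,(y,z)\in K\}$. A finitely additive measure satisfies $\mu(\varnothing)=0$ and additivity on disjoint pairs. The coupling law stated is the coupling law of the axiom system specialized to $R=X$, $I=\varnothing$, $\Pi_R=\mathrm{id}_X$. *)

From mathcomp Require Import all_boot all_order all_algebra.
From mathcomp Require Import boolp classical_sets reals.
Set Implicit Arguments. Unset Strict Implicit. Unset Printing Implicit Defensive.
Import Order.TTheory GRing.Theory Num.Theory.
Local Open Scope classical_set_scope.
Local Open Scope ring_scope.

Section Defs.
Context {X : Type} {R : realType}.

Definition relcomp (H K : set (X * X)) : set (X * X) :=
  [set p | exists y, H (p.1, y) /\ K (y, p.2)].

Definition rel_reflexive (G : set (X * X)) := forall x, G (x, x).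
Definition rel_symmetric (G : set (X * X)) := forall x y, G (x, y) -> G (y, x).
Definition rel_idempotent (G : set (X * X)) := relcomp G G = G.

Definition rel_class (G : set (X * X)) (x : X) : set X := [set y | G (x, y)].

Definition fin_additive (mu : set X -> R) :=
  mu set0 = 0 /\
  forall A B : set X, A `&` B = set0 -> mu (A `|` B) = mu A + mu B.

Definition prod_algebra (S : set (X * X)) :=
  exists (n : nat) (A B : 'I_n -> set X),
    S = [set p | exists i : 'I_n, A i p.1 /\ B i p.2].

Definition fin_additive_prod (mu2 : set (X * X) -> R) :=
  mu2 set0 = 0 /\
  forall S T, prod_algebra S -> prod_algebra T -> S `&` T = set0 ->
    mu2 (S `|` T) = mu2 S + mu2 T.

End Defs.

(* The coupling law is linear in mu2((B x X) ∩ G), so it gives that quantity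
   as mu(B)/(1 - eta) for every B. For B a class C, (C x X) ∩ G = C x C, whose
   mass is mu(C)^2; hence mu(C)^2 = mu(C)/(1 - eta), and positivity forces
   mu(C) = 1/(1 - eta). The classes partition X, so mu(X) = m/(1 - eta), and
   the case B = X gives mu2(G) = m/(1 - eta)^2 = sum_j mu(C_j)^2. *)

From mathcomp Require Import all_boot all_order all_algebra.
From mathcomp Require Import boolp classical_sets reals.
Set Implicit Arguments. Unset Strict Implicit. Unset Printing Implicit Defensive.
Import Order.TTheory GRing.Theory Num.Theory.
Local Open Scope classical_set_scope.
Local Open Scope ring_scope.

Lemma affine_fixpoint (F : fieldType) (eta a b : F) :
  eta != 1 -> a = b + eta * a -> a = b / (1 - eta).
Proof.
move=> eta_neq1 a_fix; have eta_neq1' : 1 - eta != 0 by rewrite subr_eq0 eq_sym.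
rewrite -[a](mulfK eta_neq1'); congr (_ / _).
by rewrite mulrBr mulr1 mulrC {1}a_fix addrK.
Qed.

Section EquivalenceClasses.
Variables (X : Type) (G : set (X * X)).
Hypotheses (Grefl : rel_reflexive G) (Gsym : rel_symmetric G)
  (Gidem : rel_idempotent G).

Lemma rel_idempotent_trans x y z : G (x, y) -> G (y, z) -> G (x, z).
Proof. by move=> xy yz; rewrite -Gidem; exists y. Qed.

Lemma rel_classE x y : G (x, y) -> rel_class G y = rel_class G x.
Proof.
move=> xy; apply/seteqP; split => z /=.
  exact: rel_idempotent_trans.
by apply: rel_idempotent_trans; apply: Gsym.
Qed.

Lemma setIX_rel_class x :
  (rel_class G x `*` setT) `&` G = rel_class G x `*` rel_class G x.
Proof.
apply/seteqP; split => -[y z] /=.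
  by move=> [[xy _] yz]; split => //; exact: rel_idempotent_trans xy yz.
by move=> [xy xz]; split; [split | exact: rel_idempotent_trans (Gsym xy) xz].
Qed.

Lemma trivIset_rel_classes (I : Type) (C : I -> set X) :
  (forall i, exists x, C i = rel_class G x) -> injective C -> trivIset setT C.
Proof.
move=> Cclass Cinj i j _ _ [y [Ciy Cjy]]; apply: Cinj.
case: (Cclass i) Ciy => [x ->] xy; case: (Cclass j) Cjy => [x' ->] x'y.
by rewrite -(rel_classE xy) -(rel_classE x'y).
Qed.

Lemma bigsetU_rel_classes (I : finType) (C : I -> set X) :
  (forall x, exists i, C i = rel_class G x) -> \big[setU/set0]_i C i = setT.
Proof.
move=> Ccover; apply/seteqP; split => // x _.
case: (Ccover x) => i Ci; rewrite -bigcup_seq; exists i; first exact: mem_index_enum.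
by rewrite Ci; apply: Grefl.
Qed.

End EquivalenceClasses.

Lemma fin_additive_bigsetU (R : realType) (X : Type) (mu : set X -> R)
    (I : choiceType) (s : seq I) (F : I -> set X) :
  fin_additive mu -> uniq s -> trivIset setT F ->
  mu (\big[setU/set0]_(i <- s) F i) = \sum_(i <- s) mu (F i).
Proof.
move=> [mu0 muD] + tF; elim: s => [_|i s IHs /= /andP[i_notin_s s_uniq]].
  by rewrite !big_nil mu0.
rewrite !big_cons muD ?IHs //; apply/seteqP; split => // x [Fix].
rewrite -bigcup_seq => -[j s_j Fjx].
have ij : i = j by apply: tF => //; exists x.
by move: i_notin_s; rewrite ij s_j.
Qed.

Section ClassMass.
Variables (R : realType) (X : Type) (G : set (X * X)) (eta : R).
Variables (mu : set X -> R) (mu2 : set (X * X) -> R).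
Hypotheses (Gsym : rel_symmetric G) (Gidem : rel_idempotent G).
Hypothesis mu2X : forall A B : set X, mu2 (A `*` B) = mu A * mu B.
Hypothesis coupling : forall B : set X,
  mu2 ((B `*` setT) `&` G) = mu B / (1 - eta).

Lemma rel_class_mass x :
  0 < mu (rel_class G x) -> mu (rel_class G x) = (1 - eta)^-1.
Proof.
move=> mu_pos; apply: (mulfI (lt0r_neq0 mu_pos)).
by rewrite -mu2X -(setIX_rel_class Gsym Gidem) coupling.
Qed.

End ClassMass.

Theorem corollary5p6 (R : realType) (X : Type) (x0 : X) (eta : R)
  (G : set (X * X)) (mu : set X -> R) (mu2 : set (X * X) -> R)
  (m : nat) (C : 'I_m -> set X) :
  0 <= eta -> eta < 1 ->
  rel_reflexive G -> rel_symmetric G -> rel_idempotent G ->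
  fin_additive mu -> fin_additive_prod mu2 ->
  (forall A B : set X, mu2 (A `*` B) = mu A * mu B) ->
  (* C_1, ..., C_m are exactly the (pairwise distinct) equivalence classes of G *)
  (forall j, exists x, C j = rel_class G x) ->
  injective C ->
  (forall x, exists j, C j = rel_class G x) ->
  (forall j, 0 < mu (C j)) ->
  (forall B : set X,
     mu2 ((B `*` setT) `&` G) = mu B + eta * mu2 ((B `*` setT) `&` G)) ->
  [/\ mu setT = m%:R / (1 - eta),
      mu2 G = \sum_(j < m) mu (C j) ^+ 2,
      \sum_(j < m) mu (C j) ^+ 2 = m%:R / (1 - eta) ^+ 2
    & forall B : set X, mu2 ((B `*` setT) `&` G) = mu B / (1 - eta)].
Proof.
move=> _ eta_lt1 Grefl Gsym Gidem mu_add _ mu2X Cclass Cinj Ccover Cpos coupling.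
have coupling' B : mu2 ((B `*` setT) `&` G) = mu B / (1 - eta).
  by apply: affine_fixpoint; [rewrite lt_eqF | exact: coupling].
have massC j : mu (C j) = (1 - eta)^-1.
  by case: (Cclass j) (Cpos j) => x ->; apply: rel_class_mass.
have muT : mu setT = m%:R / (1 - eta).
  have Cdisj : trivIset setT C := trivIset_rel_classes Gsym Gidem Cclass Cinj.
  rewrite -(bigsetU_rel_classes Grefl Ccover).
  rewrite (fin_additive_bigsetU mu_add (index_enum_uniq _) Cdisj).
  by under eq_bigr => j _ do rewrite massC; rewrite sumr_const card_ord mulr_natl.
have sumC : \sum_(j < m) mu (C j) ^+ 2 = m%:R / (1 - eta) ^+ 2.
  under eq_bigr => j _ do rewrite massC.
  by rewrite sumr_const card_ord exprVn mulr_natl.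
split => //; rewrite sumC -[G]setTI -setXTT coupling' muT.
by rewrite -mulrA -invfM -expr2.
Qed.
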